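(* For the complete graph $K_n$, let $V(n)$ denote the number of distinct vertices visited by the random basic walk on $K_n$ (from any fixed starting vertex and initial port). Then, as $n\to\infty$, the expected value of $V(n)$ is asymptotically at least $(1-1/e)\,n$; that is, $\liminf_{n\to\infty} \mathbb{E}[V(n)]/n \ge 1-1/e$.
   Context: Each undirected edge $\{v,w\}$ is regarded as two arcs $v\to w$ and $w\to v$. A labeling of $K_n$ assigns, at each vertex $v$, the port numbers $1,\dots,n-1$ bijectively to the $n-1$ arcs leaving $v$ (labels on $v\to w$ and $w\to v$ need not agree). In a random labeling these bijections are chosen uniformly at random, independently for different vertices. Given a labeling, a starting vertex $v_0$ and an initial port $\ell$, the basic walk leaves $v_0$ along the arc labeled $\ell$; thereafter, whenever it enters a vertex $v$ along an arc whose label is $i$, it leaves $v$ along the arc out of $v$ labeled $(i \bmod (n-1))+1$. The random basic walk is the basic walk for a random labeling. *)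

From HB Require Import structures.
From mathcomp Require Import all_boot all_order all_algebra all_fingroup.
From mathcomp Require Import all_classical all_reals all_analysis.
Set Implicit Arguments. Unset Strict Implicit. Unset Printing Implicit Defensive.
Import Order.TTheory GRing.Theory Num.Theory.

(* Vertices of K_n are 'I_n; port numbers 1..n-1 are represented by elements
   of 'I_n with nonzero value.  A labeling assigns to each vertex v a
   permutation (L v) of 'I_n with (L v) v = 0: for w <> v, (L v) w is the port
   number (in 1..n-1) of the arc v -> w.  Such a permutation is exactly a
   bijection from the n-1 arcs leaving v onto {1,..,n-1}. *)
Definition labeling n := {ffun 'I_n -> {perm 'I_n}}.

Definition valid_labeling n (L : labeling n) : bool :=
  [forall v, nat_of_ord (L v v) == 0].

Definition labelings n : {set labeling n} := [set L | valid_labeling L].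

(* next port: i |-> (i mod (n-1)) + 1, as an element of 'I_n
   (the default i is never used when n >= 2). *)
Definition next_port n (i : 'I_n) : 'I_n := insubd i ((i %% n.-1).+1).

(* State of the walk: (current vertex, label of the arc just traversed). *)
Definition walk_step n (L : labeling n) (s : 'I_n * 'I_n) : 'I_n * 'I_n :=
  let j := next_port s.2 in ((L s.1)^-1%g j, j).

Definition walk_start n (L : labeling n) (v0 l : 'I_n) : 'I_n * 'I_n :=
  ((L v0)^-1%g l, l).

Definition visited n (L : labeling n) (v0 l : 'I_n) : {set 'I_n} :=
  v0 |: [set v | [exists i : 'I_n,
                    fconnect (walk_step L) (walk_start L v0 l) (v, i)]].

(* E[V(n)] for the uniformly random labeling *)
Definition expected_visited (R : realType) n (v0 l : 'I_n) : R :=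
  ((\sum_(L in labelings n) (#|visited L v0 l|)%:R) / (#|labelings n|)%:R)%R.

From HB Require Import structures.
From mathcomp Require Import all_boot all_order all_algebra all_fingroup.
From mathcomp Require Import all_classical all_reals all_analysis.
From mathcomp Require Import zify ring lra.
Import Order.TTheory GRing.Theory Num.Theory.
Set Implicit Arguments. Unset Strict Implicit. Unset Printing Implicit Defensive.

(* Write n = m.+2 and X_k for the k-th vertex of the walk.  During its first
   n - 1 steps the walk leaves through the pairwise distinct ports
   p_k = l + k (taken cyclically in 1..n-1), and X_{k+1} = (L X_k)^-1 p_k.
   Exchanging the labels p_k and q in L X_k, for a port q not yet used to leave
   X_k, is an involution of the labelings that fixes X_0, ..., X_k and sends
   X_{k+1} to (L X_k)^-1 q.  As q ranges over the n - 1 ports, every vertex w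
   still unvisited after k steps is reached this way (take q = L X_k w), so the
   expected number U_k of unvisited vertices satisfies
   E U_{k+1} <= (1 - 1/(n-1)) E U_k.  Hence after n - 1 steps
   E U <= (n-1) (1 - 1/(n-1))^(n-1) <= (n-1)/e, and E V(n) >= (1 - 1/e) n
   holds for every n, not only in the limit. *)

Section BasicWalk.
Variables (m : nat) (v0 l : 'I_m.+2).
Hypothesis l_gt0 : 0 < l.
Implicit Types (L : labeling m.+2) (q w : 'I_m.+2).

Definition port k : 'I_m.+2 := iter k (@next_port m.+2) l.

Fixpoint walk_vertex L k : 'I_m.+2 :=
  if k is k'.+1 then ((L (walk_vertex L k'))^-1)%g (port k') else v0.

Fixpoint walk_prefix L k : {set 'I_m.+2} :=
  if k is k'.+1 then walk_vertex L k'.+1 |: walk_prefix L k' else [set v0].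

Lemma walk_prefixS L k :
  walk_prefix L k.+1 = walk_vertex L k.+1 |: walk_prefix L k.
Proof. by []. Qed.

Lemma iter_walk_step L k :
  iter k (walk_step L) (walk_start L v0 l) = (walk_vertex L k.+1, port k).
Proof. by elim: k => //= k ->. Qed.

Lemma walk_vertex_visited L k : walk_vertex L k \in visited L v0 l.
Proof.
case: k => [|k]; first exact: setU11.
apply/setU1P; right; rewrite inE; apply/existsP; exists (port k).
by rewrite -iter_walk_step fconnect_iter.
Qed.

Lemma walk_prefix_visited L k : walk_prefix L k \subset visited L v0 l.
Proof.
elim: k => [|k IH]; first by rewrite finset.sub1set (walk_vertex_visited L 0).
by rewrite walk_prefixS finset.subUset finset.sub1set walk_vertex_visited IH.
Qed.

Lemma walk_vertex_in_prefix L j k : j <= k -> walk_vertex L j \in walk_prefix L k.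
Proof.
elim: k => [|k IH]; first by rewrite leqn0 => /eqP ->; rewrite set11.
by rewrite leq_eqVlt => /predU1P[-> | /IH Pj]; rewrite !inE ?eqxx ?Pj ?orbT.
Qed.

Lemma eq_walk_prefix L L' k :
  (forall j, j <= k -> walk_vertex L j = walk_vertex L' j) ->
  walk_prefix L k = walk_prefix L' k.
Proof.
elim: k => [|k IH] eqLL' //.
by rewrite !walk_prefixS eqLL' // IH // => j /leqW; apply: eqLL'.
Qed.

Lemma port_val k : port k = ((l.-1 + k) %% m.+1).+1 :> nat.
Proof.
elim: k => [|k IH].
  by rewrite addn0 modn_small /=; have := ltn_ord l; lia.
rewrite /port iterS -/(port k) /next_port val_insubd IH ltnS ltn_pmod //.
by congr _.+1; rewrite -(addn1 (_ %% _)) modnDml addn1 addnS.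
Qed.

Lemma port_neq0 k : port k != 0 :> nat.
Proof. by rewrite port_val. Qed.

Lemma port_inj j k : j < k -> k <= m -> port j != port k.
Proof.
move=> jk km; apply/negP => /eqP/(congr1 val); rewrite /= !port_val.
by move=> [] /eqP; rewrite eqn_modDl !modn_small; lia.
Qed.

Definition swap_ports L (u p q : 'I_m.+2) : labeling m.+2 :=
  [ffun v => if v == u then (L v * tperm p q)%g else L v].

Definition unused_port L k q : bool :=
  (q != 0 :> nat) &&
  [forall j : 'I_k, (walk_vertex L j == walk_vertex L k) ==> (port j != q)].

Definition redirect k q L : labeling m.+2 :=
  if unused_port L k q then swap_ports L (walk_vertex L k) (port k) q else L.

Lemma walk_vertex_swap L k q j : unused_port L k q -> k <= m -> j <= k ->
  walk_vertex (swap_ports L (walk_vertex L k) (port k) q) j = walk_vertex L j.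
Proof.
move=> /andP[_ /forallP unused] km; elim: j => [|j IH] //= jk.
rewrite IH ?(ltnW jk) // ffunE; case: eqP => // vj_vk.
rewrite invMg permM tpermV tpermD // 1?eq_sym ?port_inj //.
by have := unused (Ordinal jk); rewrite /= vj_vk eqxx.
Qed.

Lemma unused_port_swap L k q : unused_port L k q -> k <= m ->
  unused_port (swap_ports L (walk_vertex L k) (port k) q) k q.
Proof.
move=> unused km; have /andP[q_neq0 /forallP unusedj] := unused.
apply/andP; split => //; apply/forallP => j.
by rewrite !walk_vertex_swap ?unusedj // ltnW.
Qed.

Lemma redirectK k q : k <= m -> involutive (redirect k q).
Proof.
move=> km L; rewrite {2}/redirect; case unused: (unused_port L k q).
  rewrite /redirect unused_port_swap // walk_vertex_swap //.
  by apply/ffunP => v; rewrite !ffunE; case: eqP => // ->; rewrite -mulgA tperm2 mulg1.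
by rewrite /redirect unused.
Qed.

Lemma redirect_valid k q L :
  L \in labelings m.+2 -> redirect k q L \in labelings m.+2.
Proof.
rewrite /redirect; case unused: (unused_port L k q) => //.
rewrite !inE => /forallP valid; apply/forallP => v; rewrite ffunE.
case: (v =P walk_vertex L k) => [->|_]; last exact: valid.
set u := walk_vertex L k; have /eqP Luu := valid u.
have neq_Luu p : p != 0 :> nat -> p != L u u by apply: contra => /eqP ->.
have [q_neq0 _] := andP unused.
by rewrite permM tpermD ?Luu ?neq_Luu ?port_neq0.
Qed.

Lemma sum_redirect k q (F : labeling m.+2 -> nat) : k <= m ->
  \sum_(L in labelings m.+2) F (redirect k q L) = \sum_(L in labelings m.+2) F L.
Proof.
move=> km; have redirect_inj := can_inj (redirectK q km).
rewrite [RHS](reindex_inj redirect_inj); apply: eq_bigl => L /=.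
apply/idP/idP => [|/(redirect_valid k q)]; first exact: redirect_valid.
by rewrite redirectK.
Qed.

Lemma walk_prefix_redirect k q L : k <= m ->
  walk_prefix (redirect k q L) k = walk_prefix L k.
Proof.
rewrite /redirect; case unused: (unused_port L k q) => // km.
by apply: eq_walk_prefix => j jk; rewrite walk_vertex_swap.
Qed.

Lemma walk_vertex_redirect k q L : unused_port L k q -> k <= m ->
  walk_vertex (redirect k q L) k.+1 = ((L (walk_vertex L k))^-1)%g q.
Proof.
move=> unused km; rewrite /redirect unused /= walk_vertex_swap // ffunE eqxx.
by rewrite invMg permM tpermV tpermL.
Qed.

Lemma unused_port_unvisited L k w : L \in labelings m.+2 ->
  w \notin walk_prefix L k -> unused_port L k (L (walk_vertex L k) w).
Proof.
move=> valid w_new; set u := walk_vertex L k.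
apply/andP; split.
  have Luu : L u u = 0 :> nat by move: valid; rewrite inE => /forallP /(_ u) /eqP.
  apply: contra w_new; rewrite -Luu => /eqP/val_inj/perm_inj ->.
  exact: walk_vertex_in_prefix.
apply/forallP => j; apply/implyP => /eqP vj_u; apply: contra w_new => /eqP port_j.
have -> : w = walk_vertex L j.+1 by rewrite /= vj_u -/u port_j permK.
exact: walk_vertex_in_prefix.
Qed.

Definition new_vertex L k : nat := walk_vertex L k.+1 \notin walk_prefix L k.

Lemma card_unvisitedS L k :
  #|~: walk_prefix L k| = new_vertex L k + #|~: walk_prefix L k.+1|.
Proof.
by rewrite (cardsD1 (walk_vertex L k.+1)) inE finset.setDE -finset.setCU finset.setUC.
Qed.

(* Every unvisited [w] is the next vertex of [redirect k q L] for
   [q := L (walk_vertex L k) w]. *)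
Lemma card_unvisited_le_sum_new L k : L \in labelings m.+2 -> k <= m ->
  #|~: walk_prefix L k| <= \sum_(q | q != ord0) new_vertex (redirect k q L) k.
Proof.
move=> valid km; set u := walk_vertex L k.
have new_w w : w \in ~: walk_prefix L k -> new_vertex (redirect k (L u w) L) k = 1.
  move=> /[!inE] w_new; have unused := unused_port_unvisited valid w_new.
  by rewrite /new_vertex walk_vertex_redirect // permK walk_prefix_redirect // w_new.
rewrite -sum1_card (eq_bigr _ (fun w w_new => esym (new_w w w_new))).
rewrite -(big_imset (fun q => new_vertex (redirect k q L) k)) /=; last first.
  by move=> ? ? _ _; apply: perm_inj.
apply: (sub_le_big leqnn (fun x y => leq_addr y x)) => q /imsetP[w /[!inE] w_new ->].
have /andP[+ _] := unused_port_unvisited valid w_new.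
by apply: contra => /eqP ->.
Qed.

Definition sum_unvisited k : nat := \sum_(L in labelings m.+2) #|~: walk_prefix L k|.

(* Each [redirect k q] permutes the labelings, so summing the previous bound
   over [L] yields [m.+1] times the total number of new vertices at step [k]. *)
Lemma sum_unvisitedS k : k <= m -> sum_unvisited k.+1 * m.+1 <= sum_unvisited k * m.
Proof.
move=> km; set new := \sum_(L in labelings m.+2) new_vertex L k.
have split_new : sum_unvisited k = new + sum_unvisited k.+1.
  by rewrite -big_split; apply: eq_bigr => L _; apply: card_unvisitedS.
have new_ge : sum_unvisited k <= m.+1 * new.
  apply: (@leq_trans (\sum_(L in labelings m.+2) \sum_(q | q != ord0)
                        new_vertex (redirect k q L) k)).
    by apply: leq_sum => L valid; apply: card_unvisited_le_sum_new.
  rewrite exchange_big /= (eq_bigr (fun=> new)); last first.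
    by move=> q _; rewrite (sum_redirect q (new_vertex^~ k)).
  by rewrite sum_nat_const cardC1 card_ord.
move: new_ge; rewrite split_new; nia.
Qed.

Lemma sum_unvisited_le k : k <= m.+1 ->
  sum_unvisited k * m.+1 ^ k <= #|labelings m.+2| * m.+1 * m ^ k.
Proof.
elim: k => [|k IH] km.
  rewrite !muln1 /sum_unvisited (eq_bigr (fun=> m.+1)) ?sum_nat_const // => L _.
  by rewrite cardsC1 card_ord.
rewrite !expnS mulnA (leq_trans (leq_mul (sum_unvisitedS km) (leqnn _))) //.
by rewrite -mulnA mulnCA [X in _ <= X]mulnCA leq_mul2l IH ?orbT // ltnW.
Qed.

Lemma card_visited_unvisited L k :
  m.+2 <= #|visited L v0 l| + #|~: walk_prefix L k|.
Proof.
rewrite -[X in X <= _](card_ord m.+2) -(cardsC (walk_prefix L k)) leq_add2r.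
exact: subset_leq_card (walk_prefix_visited L k).
Qed.

End BasicWalk.

Lemma card_labelings_gt0 n : 0 < #|labelings n.+1|.
Proof.
apply/card_gt0P; exists [ffun v => tperm v ord0].
by rewrite inE; apply/forallP => v; rewrite ffunE tpermL.
Qed.

Section VisitedRatio.
Variable R : realType.
Local Open Scope ring_scope.

Lemma one_sub_inv_expn_le n : (0 < n)%N -> (1 - n%:R^-1) ^+ n <= expR (-1) :> R.
Proof.
move=> n_gt0; have n_pos : 0 < n%:R :> R by rewrite ltr0n.
rewrite -[X in expR (- X)](mulVf (lt0r_neq0 n_pos)) -mulNr expRM_natr.
apply: lerXn2r; rewrite ?nnegrE ?expR_ge0 ?expR_ge1Dx //.
by rewrite subr_ge0 invf_le1 // ler1n.
Qed.

Lemma ratio_visited_ge (m N S A : nat) : (0 < N)%N ->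
  (N * m.+2 <= S + A)%N -> (A * m.+1 ^ m.+1 <= N * m.+1 * m ^ m.+1)%N ->
  1 - expR (-1) <= S%:R / N%:R / m.+2%:R :> R.
Proof.
move=> N_gt0 covered unvisited_le.
have n1_pos : 0 < m.+1%:R :> R by rewrite ltr0n.
have ratio : m%:R / m.+1%:R = 1 - m.+1%:R^-1 :> R.
  by rewrite -natr1; field; rewrite natr1 lt0r_neq0.
have A_le : A%:R <= N%:R * m.+1%:R * expR (-1) :> R.
  apply: (@le_trans _ _ (N%:R * m.+1%:R * (1 - m.+1%:R^-1) ^+ m.+1)).
    rewrite -ratio expr_div_n mulrA ler_pdivlMr ?exprn_gt0 //.
    by rewrite -!natrX -!natrM ler_nat.
  by rewrite ler_pM2l ?one_sub_inv_expn_le // mulr_gt0 ?ltr0n.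
move: covered; rewrite -(ler_nat R) natrD natrM => covered.
have e_ge0 := expR_ge0 (-1 : R).
have n1_le : m.+1%:R <= m.+2%:R :> R by rewrite ler_nat.
have N_pos : 0 < N%:R :> R by rewrite ltr0n.
rewrite ler_pdivlMr ?ltr0n // ler_pdivlMr ?ltr0n //.
nra.
Qed.

End VisitedRatio.

Lemma limn_einf_ge (R : realType) (u : (\bar R)^nat) (c : \bar R) :
  (forall n, (c <= u n)%E) -> (c <= limn_einf u)%E.
Proof.
move=> c_le; rewrite limn_einf_lim; apply: lime_ge; first exact: is_cvg_einfs.
by apply: nearW => n; apply: le_ereal_inf_tmp => _ [k _ <-]; apply: c_le.
Qed.

Theorem theorem5p1 (R : realType)
    (v0 : forall n : nat, 'I_n.+2) (l : forall n : nat, 'I_n.+2)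
    (hl : forall n, (0 < nat_of_ord (l n))%N) :
  ((1 - expR (-1)) %:E <=
   limn_einf (fun n : nat =>
     (expected_visited R (v0 n) (l n) / (n.+2)%:R)%:E))%E.
Proof.
apply: limn_einf_ge => n; rewrite lee_fin /expected_visited -natr_sum.
apply: ratio_visited_ge (sum_unvisited_le (v0 n) (hl n) (leqnn _)).
  exact: card_labelings_gt0.
rewrite -sum_nat_const /sum_unvisited -big_split leq_sum // => L _.
exact: card_visited_unvisited.
Qed.
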